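(* Let $A\in\mathbb{R}^{n\times n}$ be such that $A-I$ is an irreducible singular $M$-matrix, let $v>0$ satisfy $(A^T-I)v=0$, and let $b\in\mathbb{R}^n$ satisfy $v^Tb=0$. Then every solution of $Ax-|x|=b$ is (componentwise) nonnegative, and there is exactly one solution $\hat{x}$ having at least one zero component. Moreover, for every $x^0\in\mathbb{R}^n$ with $D(x^0)\neq I$ (i.e. $x^0$ has at least one nonpositive component), the generalized Newton method $x^{k+1}=(A-D(x^k))^{-1}b$ is well defined for all $k\ge 0$ and $x^k=\hat{x}$ for all $k\ge n+1$.
   Context: For $x\in\mathbb{R}^n$, $|x|$ is the componentwise absolute value, $\mathrm{sign}(x)$ is the vector whose components are $1,0,-1$ according as the corresponding component of $x$ is positive, zero, negative, and $D(x)=\mathrm{diag}(\mathrm{sign}(x))$. A $Z$-matrix is a real square matrix whose off-diagonal entries are all nonpositive; any $Z$-matrix can be written $sI-B$ with $B\ge 0$ entrywise, and it is a singular $M$-matrix if $s=\rho(B)$, where $\rho$ is spectral radius. A square matrix $M$ is reducible if there is a permutation matrix $P$ with $P^TMP=\begin{bmatrix}M_{11}&M_{12}\\0&M_{22}\end{bmatrix}$ where $M_{11},M_{22}$ are square (nonempty) blocks; it is irreducible otherwise. $v>0$ means all components of $v$ are positive. *)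

From HB Require Import structures.
From mathcomp Require Import all_boot all_order all_algebra all_fingroup.
From mathcomp Require Import complex.
Set Implicit Arguments. Unset Strict Implicit. Unset Printing Implicit Defensive.
Import Order.TTheory GRing.Theory Num.Theory.
Local Open Scope ring_scope.

Section Defs.
Variable R : rcfType.
Variable n : nat.

Definition absv (x : 'cV[R]_n) : 'cV[R]_n := map_mx (fun r => `|r|) x.

Definition Dsgn (x : 'cV[R]_n) : 'M[R]_n := diag_mx (map_mx Num.sg x)^T.

Definition Zmatrix (M : 'M[R]_n) : Prop :=
  forall i j : 'I_n, i != j -> M i j <= 0.

Definition nonneg_mx (B : 'M[R]_n) : Prop := forall i j, 0 <= B i j.

Definition is_spectral_radius (B : 'M[R]_n) (r : R) : Prop :=
  (exists2 l : R[i], eigenvalue (map_mx (fun x => x%:C%C) B) l & `|l| = r%:C%C) /\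
  (forall l : R[i], eigenvalue (map_mx (fun x => x%:C%C) B) l -> `|l| <= r%:C%C).

Definition singular_M_matrix (M : 'M[R]_n) : Prop :=
  Zmatrix M /\
  exists (s : R) (B : 'M[R]_n), nonneg_mx B /\ M = s%:M - B /\ is_spectral_radius B s.

(* reducible: P^T M P = [M11 M12; 0 M22] with square nonempty diagonal blocks *)
Definition reducible (M : 'M[R]_n) : Prop :=
  exists (s : 'S_n) (k : nat), (0 < k < n)%N /\
    forall i j : 'I_n, (k <= i)%N -> (j < k)%N ->
      ((perm_mx s)^T *m M *m perm_mx s) i j = 0.

Definition irreducible (M : 'M[R]_n) : Prop := ~ reducible M.

Fixpoint newton (A : 'M[R]_n) (b x0 : 'cV[R]_n) (k : nat) : 'cV[R]_n :=
  match k with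
  | O => x0
  | S k' => invmx (A - Dsgn (newton A b x0 k')) *m b
  end.

End Defs.

From HB Require Import structures.
From mathcomp Require Import all_boot all_order all_algebra all_fingroup.
From mathcomp Require Import complex.
From mathcomp Require Import ring lra zify.
Set Implicit Arguments. Unset Strict Implicit. Unset Printing Implicit Defensive.
Import Order.TTheory GRing.Theory Num.Theory.
Local Open Scope ring_scope.

(* Write M = A - I and K(x) = A - D(x).  Since M is an irreducible Z-matrix
   with v^T M = 0 and v > 0, the matrix K(x) is monotone (K(x) w >= 0 implies
   w >= 0), hence invertible, whenever D(x) <> I: then v^T K(x), with entries
   v_j (1 - sg x_j), is nonnegative and nonzero.  A solution x of Ax - |x| = b
   satisfies v^T (|x| - x) = v^T b = 0, so x >= 0 and M x = b.  The kernel of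
   M is spanned by a positive vector u, so these solutions lie on a line
   x_p + R u, which leaves the nonnegative orthant at a single point xhat.
   Every Newton iterate x^(k+1) lies below xhat, the iterates increase from
   x^1 on, and their set of nonpositive components shrinks strictly until xhat
   is reached; since xhat has a zero component this set never becomes empty, so
   at most n steps after the first one are needed. *)

Lemma perm_conj_mxE (R : pzSemiRingType) n (s : 'S_n) (M : 'M[R]_n) i j :
  ((perm_mx s)^T *m M *m perm_mx s) i j = M ((s^-1)%g i) ((s^-1)%g j).
Proof.
rewrite tr_perm_mx -row_permE.
have -> : perm_mx s = perm_mx (s^-1)^-1 :> 'M[R]_n by rewrite invgK.
by rewrite -col_permE !mxE.
Qed.

Lemma irreducible_offdiag (R : rcfType) n (M K : 'M[R]_n) :
  (forall i j, i != j -> K i j = M i j) -> irreducible M -> irreducible K.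
Proof.
move=> KM irrM [s [k [kn hK]]]; apply: irrM; exists s, k; split=> // i j ki jk.
have ij : i != j by apply: contraTneq (leq_trans jk ki) => ->; rewrite ltnn.
by rewrite perm_conj_mxE -KM ?(inj_eq perm_inj) // -perm_conj_mxE hK.
Qed.

Lemma irreducible_cut (R : rcfType) n (M : 'M[R]_n) (S : {set 'I_n}) :
  irreducible M -> (forall i j, i \in S -> j \notin S -> M i j = 0) ->
  S = set0 \/ S = setT.
Proof.
move=> irrM hS.
have [->|S0] := eqVneq S set0; first by left.
have [->|ST] := eqVneq S setT; first by right.
exfalso; apply: irrM.
(* Listing ~: S before S puts the block of rows S and columns ~: S in the
   lower-left corner. *)
pose s := enum (~: S) ++ enum S.
have size_s : size s = n by rewrite size_cat -!cardE addnC cardsC card_ord.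
have uniq_s : uniq s.
  rewrite cat_uniq !enum_uniq /= andbT.
  by apply/hasPn => x; rewrite !mem_enum inE negbK.
pose f (i : 'I_n) := nth i s i.
have f_inj : injective f.
  move=> i j; rewrite /f (set_nth_default i j) ?size_s // => /eqP.
  by rewrite nth_uniq ?size_s // => /eqP /val_inj.
pose t := perm f_inj.
have cardS : (#|~: S| + #|S| = n)%N by rewrite addnC cardsC card_ord.
have SC_gt0 : (0 < #|~: S|)%N.
  by rewrite card_gt0; apply: contraNneq ST => e; rewrite -(setCK S) e setC0.
have S_gt0 : (0 < #|S|)%N by rewrite card_gt0.
exists (t^-1)%g, #|~: S|; split; first lia.
move=> i j hi hj; rewrite perm_conj_mxE invgK !permE /f !nth_cat -cardE.
rewrite ltnNge hi hj /=; apply: hS; last first.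
  by rewrite -in_setC -mem_enum mem_nth // -cardE.
by rewrite -mem_enum mem_nth // -cardE ltn_subLR // cardS.
Qed.

Lemma mulmx_weighted_sum (R : comPzRingType) n (K : 'M[R]_n) (v w : 'cV[R]_n)
    (p : 'I_n -> R) :
  \sum_i p i * v i 0 * (K *m w) i 0 =
  \sum_j p j * w j 0 * (v^T *m K) 0 j
    - \sum_i \sum_j (p j - p i) * v i 0 * K i j * w j 0.
Proof.
have -> : \sum_i p i * v i 0 * (K *m w) i 0 =
          \sum_i \sum_j p i * v i 0 * K i j * w j 0.
  apply: eq_bigr => i _; rewrite mxE mulr_sumr.
  by apply: eq_bigr => j _; rewrite mulrA.
have -> : \sum_j p j * w j 0 * (v^T *m K) 0 j =
          \sum_i \sum_j p j * v i 0 * K i j * w j 0.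
  rewrite exchange_big; apply: eq_bigr => j _; rewrite mxE mulr_sumr.
  by apply: eq_bigr => i _; rewrite mxE; ring.
have -> : \sum_i \sum_j (p j - p i) * v i 0 * K i j * w j 0 =
          \sum_i \sum_j p j * v i 0 * K i j * w j 0
            - \sum_i \sum_j p i * v i 0 * K i j * w j 0.
  rewrite -sumrB; apply: eq_bigr => i _; rewrite -sumrB.
  by apply: eq_bigr => j _; ring.
by rewrite opprB addrC subrK.
Qed.

(* Weight the rows of K w by v on the negative support N of w: the weighted sum
   splits into a part controlled by v^T K on N and the flow of K across the
   boundary of N, both of sign opposite to K w, so both vanish. *)
Lemma Zmatrix_negative_support (R : rcfType) n (K : 'M[R]_n) (v w : 'cV[R]_n) :
  Zmatrix K -> (forall i, 0 < v i 0) -> (forall j, 0 <= (v^T *m K) 0 j) ->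
  (forall i, 0 <= (K *m w) i 0) ->
  (forall j, w j 0 < 0 -> (v^T *m K) 0 j = 0) /\
  (forall i j, 0 <= w i 0 -> w j 0 < 0 -> K i j = 0).
Proof.
move=> ZK v_gt0 vK_ge0 Kw_ge0.
pose p i : R := ((w i 0 < 0)%R)%:R.
set c := v^T *m K.
have Q_ge0 : 0 <= \sum_i p i * v i 0 * (K *m w) i 0.
  apply: sumr_ge0 => i _; rewrite /p; case: (w i 0 < 0)%R => /=.
    by rewrite mul1r mulr_ge0 // ltW.
  by rewrite !mul0r.
have T1_ge0 j : 0 <= - (p j * w j 0 * c 0 j).
  rewrite /p; case: ltP => /= h; last by rewrite !mul0r oppr0.
  by rewrite mul1r oppr_ge0 mulr_le0_ge0 // ltW.
have T2_ge0 i j : 0 <= (p j - p i) * v i 0 * K i j * w j 0.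
  rewrite /p; case: (ltP (w j 0)) => hj; case: (ltP (w i 0)) => hi /=;
    rewrite ?subrr ?mul0r //.
  - have ij : i != j by apply: contraTneq hi => ->; rewrite -ltNge.
    rewrite subr0 mul1r -mulrA; apply: mulr_ge0; first exact: ltW.
    by apply: mulr_le0; [exact: ZK | exact: ltW].
  - have ij : i != j by apply: contraTneq hi => ->; rewrite -leNgt.
    rewrite sub0r mulN1r !mulNr oppr_ge0 -mulrA.
    apply: mulr_ge0_le0; first exact: ltW.
    by apply: mulr_le0_ge0; [exact: ZK |].
have S1_ge0 : 0 <= \sum_j - (p j * w j 0 * c 0 j) by apply: sumr_ge0.
have S2i_ge0 i : 0 <= \sum_j (p j - p i) * v i 0 * K i j * w j 0
  by apply: sumr_ge0.
have S2_ge0 : 0 <= \sum_i \sum_j (p j - p i) * v i 0 * K i j * w j 0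
  by apply: sumr_ge0.
have [S1_eq0 S2_eq0] : \sum_j - (p j * w j 0 * c 0 j) = 0 /\
    \sum_i \sum_j (p j - p i) * v i 0 * K i j * w j 0 = 0.
  by move: Q_ge0 S1_ge0 S2_ge0; rewrite mulmx_weighted_sum sumrN; lra.
split=> [j hj|i j hi hj].
  move: (psumr_eq0P (fun j _ => T1_ge0 j) S1_eq0 (i:=j) isT).
  by rewrite /p hj mul1r => /eqP; rewrite oppr_eq0 mulf_eq0 (lt_eqF hj) => /eqP.
have S2i_eq0 := psumr_eq0P (fun i _ => S2i_ge0 i) S2_eq0 (i:=i) isT.
have /eqP := psumr_eq0P (fun j _ => T2_ge0 i j) S2i_eq0 (i:=j) isT.
rewrite /p hj ltNge hi /= subr0 mul1r !mulf_eq0 (lt_eqF hj) (gt_eqF (v_gt0 i)).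
by rewrite orbF => /eqP.
Qed.

Lemma Zmatrix_irreducible_monotone (R : rcfType) n (K : 'M[R]_n) (v : 'cV[R]_n) :
  Zmatrix K -> irreducible K -> (forall i, 0 < v i 0) ->
  (forall j, 0 <= (v^T *m K) 0 j) -> (exists j, 0 < (v^T *m K) 0 j) ->
  forall w : 'cV[R]_n, (forall i, 0 <= (K *m w) i 0) -> forall i, 0 <= w i 0.
Proof.
move=> ZK irrK v_gt0 vK_ge0 [j0 vK_j0] w Kw_ge0.
have [vK_eq0 K_cut] := Zmatrix_negative_support ZK v_gt0 vK_ge0 Kw_ge0.
case: (irreducible_cut (S := [set i | 0 <= w i 0]) irrK) => [i j|S0|ST].
- by rewrite !inE -ltNge; exact: K_cut.
- have : j0 \notin [set i | 0 <= w i 0] by rewrite S0 inE.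
  by rewrite inE -ltNge => /vK_eq0 vK0; move: vK_j0; rewrite vK0 ltxx.
- move=> i; have : i \in [set i | 0 <= w i 0] by rewrite ST inE.
  by rewrite inE.
Qed.

Lemma monotone_unitmx (R : realFieldType) n (K : 'M[R]_n) :
  (forall w : 'cV[R]_n, (forall i, 0 <= (K *m w) i 0) -> forall i, 0 <= w i 0) ->
  K \in unitmx.
Proof.
move=> monoK; rewrite -unitmx_tr -row_free_unit; apply: inj_row_free => w.
move=> /(congr1 trmx); rewrite trmx_mul trmxK trmx0 => Kw.
have w_ge0 : forall i, 0 <= w^T i 0 by apply: monoK => i; rewrite Kw mxE.
have w_le0 : forall i, 0 <= (- w^T) i 0.
  by apply: monoK => i; rewrite mulmxN Kw oppr0 mxE.
apply/rowP => i; rewrite mxE; apply/eqP; rewrite eq_le.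
by move: (w_ge0 i) (w_le0 i); rewrite !mxE oppr_ge0 => -> ->.
Qed.

Lemma Zmatrix_ker_ge0_eq0 (R : rcfType) n (M : 'M[R]_n) (w : 'cV[R]_n) :
  Zmatrix M -> irreducible M -> M *m w = 0 -> (forall i, 0 <= w i 0) ->
  (exists i, w i 0 = 0) -> w = 0.
Proof.
move=> ZM irrM Mw w_ge0 [i0 w_i0].
have M_cut i j : w i 0 == 0 -> w j 0 != 0 -> M i j = 0.
  move=> /eqP w_i w_j.
  have terms_ge0 k : 0 <= - (M i k * w k 0).
    have [<-|ik] := eqVneq i k; first by rewrite w_i mulr0 oppr0.
    by rewrite oppr_ge0 mulr_le0_ge0 ?ZM.
  have sum_eq0 : \sum_k - (M i k * w k 0) = 0.
    by rewrite sumrN; move/colP: Mw => /(_ i); rewrite !mxE => ->; rewrite oppr0.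
  move/eqP: (psumr_eq0P (fun k _ => terms_ge0 k) sum_eq0 (i:=j) isT).
  by rewrite oppr_eq0 mulf_eq0 (negbTE w_j) orbF => /eqP.
case: (irreducible_cut (S := [set k | w k 0 == 0]) irrM) => [i j|S0|ST].
- by rewrite !inE; exact: M_cut.
- by have : i0 \in [set k | w k 0 == 0]; [rewrite inE w_i0 | rewrite S0 inE].
- apply/colP => i; rewrite mxE.
  by have : i \in [set k | w k 0 == 0]; [rewrite ST inE | rewrite inE => /eqP].
Qed.

Lemma sub_scale_boundary (R : realFieldType) n (u w : 'cV[R]_n) :
  (0 < n)%N -> (forall i, 0 < u i 0) ->
  exists c, (forall i, 0 <= (w - c *: u) i 0) /\ exists i, (w - c *: u) i 0 = 0.
Proof.
move=> n_gt0 u_gt0.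
have [i _ i_min] := @arg_minP _ R _ (Ordinal n_gt0) predT (fun j => w j 0 / u j 0) isT.
exists (w i 0 / u i 0); split=> [j|]; last first.
  by exists i; rewrite !mxE divfK ?subrr // gt_eqF.
by rewrite !mxE subr_ge0 -ler_pdivlMr //; exact: i_min.
Qed.

Lemma Zmatrix_ker_span (R : rcfType) n (M : 'M[R]_n) (u w : 'cV[R]_n) :
  Zmatrix M -> irreducible M -> (forall i, 0 < u i 0) -> M *m u = 0 ->
  M *m w = 0 -> exists c, w = c *: u.
Proof.
move=> ZM irrM u_gt0 Mu Mw.
have [n0|n_gt0] := posnP n.
  by exists 0; apply/colP => i; have := ltn_ord i; rewrite {2}n0.
have [c [wu_ge0 wu_0]] := sub_scale_boundary w n_gt0 u_gt0.
exists c; apply/eqP; rewrite -subr_eq0; apply/eqP.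
apply: (Zmatrix_ker_ge0_eq0 ZM irrM) => //.
by rewrite mulmxBr -scalemxAr Mw Mu scaler0 subr0.
Qed.

Lemma sgr_le1 (R : realDomainType) (r : R) : Num.sg r <= 1.
Proof. by case: (sgrP r) => _; lra. Qed.

Lemma sgr_lt1 (R : realDomainType) (r : R) : (Num.sg r < 1) = (r <= 0).
Proof. by rewrite lt_neqAle sgr_le1 andbT sgr_cp0 -leNgt. Qed.

Lemma sgr_mul_le_norm (R : realDomainType) (a r : R) : Num.sg a * r <= `|r|.
Proof.
case: (sgrP a) => _; rewrite ?mul0r ?mul1r ?mulN1r ?normr_ge0 ?ler_norm //.
by rewrite -normrN ler_norm.
Qed.

Section SignDiagonal.
Variables (R : rcfType) (n : nat).
Implicit Types (A : 'M[R]_n) (x w : 'cV[R]_n).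

Lemma Dsgn_mulE x w i : (Dsgn x *m w) i 0 = Num.sg (x i 0) * w i 0.
Proof. by rewrite /Dsgn mul_diag_mx !mxE. Qed.

Lemma sub_Dsgn_mulE x w i :
  (w - Dsgn x *m w) i 0 = (1 - Num.sg (x i 0)) * w i 0.
Proof. by rewrite [LHS]mxE mxE Dsgn_mulE mulrBl mul1r. Qed.

Lemma Dsgn_mul_id x : Dsgn x *m x = absv x.
Proof. by apply/colP => i; rewrite Dsgn_mulE mxE -normrEsg. Qed.

Lemma absv_id x : (forall i, 0 <= x i 0) -> absv x = x.
Proof. by move=> x_ge0; apply/colP => i; rewrite mxE ger0_norm. Qed.

Lemma subDsgn_offdiag A x i j : i != j -> (A - Dsgn x) i j = (A - 1%:M) i j.
Proof. by move=> ij; rewrite !mxE (negbTE ij) !mulr0n. Qed.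

Lemma Dsgn_neq1P x : reflect (exists i, x i 0 <= 0) (Dsgn x != 1%:M).
Proof.
apply: (iffP idP) => [D_neq1|[i x_i] ].
  apply/existsP; apply: contraR D_neq1 => /existsPn x_gt0; apply/eqP/matrixP.
  by move=> i j; rewrite !mxE gtr0_sg // ltNge x_gt0.
apply: contraTneq x_i => /matrixP /(_ i i); rewrite !mxE !eqxx !mulr1n => sg1.
by rewrite -ltNge -sgr_gt0 sg1 ltr01.
Qed.

End SignDiagonal.

Section AbsoluteValueEquation.
Variables (R : rcfType) (n : nat) (A : 'M[R]_n) (v b : 'cV[R]_n).
Local Notation M := (A - 1%:M).
Hypotheses (ZM : Zmatrix M) (irrM : irreducible M).
Hypotheses (v_gt0 : forall i, 0 < v i 0) (vM : v^T *m M = 0) (vb : v^T *m b = 0).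
Implicit Types (x w : 'cV[R]_n).

Lemma subDsgnE x : A - Dsgn x = M + (1%:M - Dsgn x).
Proof. by rewrite addrA subrK. Qed.

Lemma subDsgn_mul x w : (A - Dsgn x) *m w = M *m w + (w - Dsgn x *m w).
Proof. by rewrite subDsgnE mulmxDl; congr (_ + _); rewrite mulmxBl mul1mx. Qed.

Lemma vT_subDsgn x : v^T *m (A - Dsgn x) = \row_j (v j 0 * (1 - Num.sg (x j 0))).
Proof.
rewrite subDsgnE mulmxDr vM add0r; apply/rowP => j.
rewrite !mxE (bigD1 j) //= big1 => [|i ij]; last first.
  by rewrite !mxE (negbTE ij) subrr mulr0.
by rewrite !mxE eqxx mulr1n addr0.
Qed.

Lemma vT_subDsgn_mul x w :
  (v^T *m ((A - Dsgn x) *m w)) 0 0 = \sum_j v j 0 * (1 - Num.sg (x j 0)) * w j 0.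
Proof. by rewrite mulmxA vT_subDsgn mxE; apply: eq_bigr => j _; rewrite mxE. Qed.

Lemma subDsgn_monotone x : Dsgn x != 1%:M ->
  forall w, (forall i, 0 <= ((A - Dsgn x) *m w) i 0) -> forall i, 0 <= w i 0.
Proof.
move=> /Dsgn_neq1P [j x_j]; apply: (Zmatrix_irreducible_monotone (v := v)) => //.
- by move=> i k ik; rewrite subDsgn_offdiag // ZM.
- exact: irreducible_offdiag (subDsgn_offdiag A x) irrM.
- move=> k; rewrite vT_subDsgn mxE; apply: mulr_ge0; first exact: ltW.
  by rewrite subr_ge0 sgr_le1.
- by exists j; rewrite vT_subDsgn mxE mulr_gt0 // subr_gt0 sgr_lt1.
Qed.

Lemma subDsgn_unit x : Dsgn x != 1%:M -> A - Dsgn x \in unitmx.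
Proof. by move/subDsgn_monotone; exact: monotone_unitmx. Qed.

(* v^T (|x| - x) = v^T b = 0 with |x| - x >= 0 and v > 0. *)
Lemma solution_ge0 x : A *m x - absv x = b -> forall i, 0 <= x i 0.
Proof.
move=> sol_x i.
have vT_sub : (v^T *m (absv x - x)) 0 0 = 0.
  have -> : absv x - x = - (A *m x - absv x) + M *m x.
    by rewrite mulmxBl mul1mx opprB addrA subrK.
  by rewrite sol_x mulmxDr mulmxA vM mul0mx addr0 mulmxN vb oppr0 mxE.
have terms_ge0 j : 0 <= v^T 0 j * (absv x - x) j 0.
  rewrite !mxE; apply: mulr_ge0; first exact: ltW.
  by rewrite subr_ge0 ler_norm.
move: vT_sub; rewrite mxE => /(psumr_eq0P (fun j _ => terms_ge0 j)) /(_ i isT).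
move/eqP; rewrite !mxE mulf_eq0 (gt_eqF (v_gt0 i)) subr_eq0 => /eqP <-.
exact: normr_ge0.
Qed.

Lemma solution_ge0E x : (forall i, 0 <= x i 0) -> A *m x - absv x = M *m x.
Proof. by move=> x_ge0; rewrite absv_id // mulmxBl mul1mx. Qed.

Definition ones_but (i0 : 'I_n) : 'cV[R]_n := \col_i (i != i0)%:R.

Lemma Dsgn_ones_but i0 : Dsgn (ones_but i0) = 1%:M - delta_mx i0 i0.
Proof.
apply/matrixP => i j; rewrite !mxE.
case: (eqVneq i i0) => [ii0|ii0]; case: (eqVneq j i0) => [ji0|ji0]; subst;
  by rewrite ?eqxx ?(eq_sym i0 j) ?(negbTE ii0) ?(negbTE ji0) /= ?sgr0 ?sgr1 ?subrr ?subr0.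
Qed.

Lemma subDsgn_ones_but_mul i0 w :
  (A - Dsgn (ones_but i0)) *m w = M *m w + w i0 0 *: delta_mx i0 0.
Proof.
rewrite subDsgnE Dsgn_ones_but mulmxDl; congr (_ + _).
have -> : 1%:M - (1%:M - delta_mx i0 i0) = delta_mx i0 i0 :> 'M[R]_n.
  by rewrite opprB addrC subrK.
apply/colP => i; rewrite !mxE (bigD1 i0) //= big1 => [|j /negbTE j_i0].
  by rewrite !mxE !eqxx !andbT addr0 mulrC.
by rewrite !mxE j_i0 andbF mul0r.
Qed.

Lemma vT_subDsgn_ones_but_mul i0 w :
  (v^T *m ((A - Dsgn (ones_but i0)) *m w)) 0 0 = v i0 0 * w i0 0.
Proof.
rewrite subDsgn_ones_but_mul mulmxDr mulmxA vM mul0mx add0r -scalemxAr -colE.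
by rewrite !mxE mulrC.
Qed.

Lemma Dsgn_ones_but_neq1 i0 : Dsgn (ones_but i0) != 1%:M.
Proof. by apply/Dsgn_neq1P; exists i0; rewrite mxE eqxx. Qed.

(* u := (A - D(ones_but i0))^-1 e_i0 is nonnegative, and pairing with v forces
   u_i0 = 1, whence M u = 0; irreducibility then makes u positive. *)
Lemma exists_ker_gt0 (i0 : 'I_n) :
  exists2 u : 'cV[R]_n, (forall i, 0 < u i 0) & M *m u = 0.
Proof.
set K := A - Dsgn (ones_but i0).
pose u : 'cV[R]_n := invmx K *m delta_mx i0 0.
have Ku : K *m u = delta_mx i0 0 by rewrite mulKVmx ?subDsgn_unit ?Dsgn_ones_but_neq1.
have u_i0 : u i0 0 = 1.
  have := vT_subDsgn_ones_but_mul i0 u; rewrite -/K Ku -colE !mxE.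
  by rewrite -{1}[v i0 0]mulr1 => /(mulfI (lt0r_neq0 (v_gt0 i0))).
have Mu : M *m u = 0.
  move: Ku; rewrite subDsgn_ones_but_mul u_i0 scale1r.
  by move/(canRL (addrK _)); rewrite subrr.
have u_ge0 : forall i, 0 <= u i 0.
  apply: (subDsgn_monotone (Dsgn_ones_but_neq1 i0)) => i.
  by rewrite -/K Ku mxE ler0n.
exists u => // i; rewrite lt_neqAle u_ge0 andbT; apply/eqP => u_i.
have /colP/(_ i0) := Zmatrix_ker_ge0_eq0 ZM irrM Mu u_ge0 (ex_intro _ i (esym u_i)).
by rewrite u_i0 mxE => /eqP; rewrite oner_eq0.
Qed.

Lemma exists_particular_solution (i0 : 'I_n) : exists x, M *m x = b.
Proof.
set K := A - Dsgn (ones_but i0).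
pose x := invmx K *m b.
have Kx : K *m x = b by rewrite mulKVmx ?subDsgn_unit ?Dsgn_ones_but_neq1.
have x_i0 : x i0 0 = 0.
  have := vT_subDsgn_ones_but_mul i0 x; rewrite -/K Kx vb mxE => /esym/eqP.
  by rewrite mulf_eq0 (gt_eqF (v_gt0 i0)) => /eqP.
by exists x; move: Kx; rewrite subDsgn_ones_but_mul x_i0 scale0r addr0.
Qed.

Lemma exists_boundary_solution : (0 < n)%N ->
  exists xh, [/\ M *m xh = b, forall i, 0 <= xh i 0 & exists i, xh i 0 = 0].
Proof.
move=> n_gt0; set i0 := Ordinal n_gt0.
have [u u_gt0 Mu] := exists_ker_gt0 i0.
have [x Mx] := exists_particular_solution i0.
have [c [xc_ge0 xc_0]] := sub_scale_boundary x n_gt0 u_gt0.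
by exists (x - c *: u); split; rewrite // mulmxBr -scalemxAr Mx Mu scaler0 subr0.
Qed.

Lemma boundary_solution_unique x y i j :
  M *m x = b -> M *m y = b -> (forall k, 0 <= x k 0) -> (forall k, 0 <= y k 0) ->
  x i 0 = 0 -> y j 0 = 0 -> y = x.
Proof.
move=> Mx My x_ge0 y_ge0 x_i y_j.
have [u u_gt0 Mu] := exists_ker_gt0 i.
have [c yx] : exists c, y - x = c *: u.
  by apply: Zmatrix_ker_span Mu _; rewrite // mulmxBr Mx My subrr.
have c_ge0 : 0 <= c.
  move/colP/(_ i): yx; rewrite !mxE x_i subr0 => y_i.
  by rewrite -(pmulr_lge0 _ (u_gt0 i)) -y_i.
have c_le0 : c <= 0.
  move/colP/(_ j): yx; rewrite !mxE y_j sub0r => x_j.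
  by rewrite -(pmulr_lle0 _ (u_gt0 j)) -x_j oppr_le0.
have c0 : c = 0 by apply/eqP; rewrite eq_le c_le0 c_ge0.
by apply/eqP; rewrite -subr_eq0 yx c0 scale0r.
Qed.

Section NewtonIteration.
Variables (xh : 'cV[R]_n) (i0 : 'I_n).
Hypotheses (Mxh : M *m xh = b) (xh_ge0 : forall i, 0 <= xh i 0) (xh_i0 : xh i0 0 = 0).

Lemma newton_step_le x y : Dsgn x != 1%:M -> (A - Dsgn x) *m y = b ->
  forall i, y i 0 <= xh i 0.
Proof.
move=> Dx Ky; suff xh_y_ge0 i : 0 <= (xh - y) i 0.
  by move=> i; have := xh_y_ge0 i; rewrite !mxE subr_ge0.
apply: (subDsgn_monotone Dx) => k.
rewrite mulmxBr Ky subDsgn_mul Mxh addrC addKr.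
by rewrite sub_Dsgn_mulE mulr_ge0 // subr_ge0 sgr_le1.
Qed.

Lemma newton_step_mono x y z : Dsgn y != 1%:M ->
  (A - Dsgn x) *m y = b -> (A - Dsgn y) *m z = b -> forall i, y i 0 <= z i 0.
Proof.
move=> Dy Ky Kz; suff z_y_ge0 i : 0 <= (z - y) i 0.
  by move=> i; have := z_y_ge0 i; rewrite !mxE subr_ge0.
apply: (subDsgn_monotone Dy) => k.
rewrite mulmxBr Kz -Ky -mulmxBl opprB addrC addrA subrK mulmxBl Dsgn_mul_id.
by rewrite [leRHS]mxE [X in _ + X]mxE Dsgn_mulE mxE subr_ge0 sgr_mul_le_norm.
Qed.

(* A Newton step that keeps every nonpositive component of x nonpositive
   already lands on xh: the v-weighted sum forces those components to vanish,
   so the step solves M y = b and touches the boundary at i0. *)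
Lemma newton_step_eq x y : x i0 0 <= 0 -> (A - Dsgn x) *m y = b ->
  (forall i, y i 0 <= xh i 0) -> (forall i, x i 0 <= 0 -> y i 0 <= 0) -> y = xh.
Proof.
move=> x_i0 Ky y_le nonpos_xy.
have y_eq0 j : x j 0 <= 0 -> y j 0 = 0.
  move=> x_j.
  have terms_ge0 k : 0 <= - (v k 0 * (1 - Num.sg (x k 0)) * y k 0).
    have [x_k|x_k] := lerP (x k 0) 0; last by rewrite gtr0_sg // subrr mulr0 mul0r oppr0.
    rewrite oppr_ge0 mulr_ge0_le0 ?nonpos_xy // mulr_ge0 ?subr_ge0 ?sgr_le1 //.
    exact: ltW.
  have sum_eq0 : \sum_k - (v k 0 * (1 - Num.sg (x k 0)) * y k 0) = 0.
    by rewrite sumrN -vT_subDsgn_mul Ky vb mxE oppr0.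
  move/eqP: (psumr_eq0P (fun k _ => terms_ge0 k) sum_eq0 (i:=j) isT).
  have sg_lt1 : Num.sg (x j 0) < 1 by rewrite sgr_lt1.
  by rewrite oppr_eq0 !mulf_eq0 (gt_eqF (v_gt0 j)) subr_eq0 eq_sym (lt_eqF sg_lt1) => /eqP.
have Dy : Dsgn x *m y = y.
  apply/colP => i; rewrite Dsgn_mulE.
  by have [/y_eq0 ->|/gtr0_sg ->] := lerP (x i 0) 0; rewrite ?mulr0 ?mul1r.
have My : M *m y = b by rewrite -Ky subDsgn_mul Dy subrr addr0.
apply/eqP; rewrite eq_sym -subr_eq0; apply/eqP.
apply: (Zmatrix_ker_ge0_eq0 ZM irrM); first by rewrite mulmxBr Mxh My subrr.
  by move=> i; rewrite !mxE subr_ge0.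
by exists i0; rewrite !mxE xh_i0 y_eq0 // subrr.
Qed.

Lemma newton_fixed_point : invmx (A - Dsgn xh) *m b = xh.
Proof.
have Kxh : (A - Dsgn xh) *m xh = b by rewrite mulmxBl Dsgn_mul_id solution_ge0E.
by rewrite -{1}Kxh mulKmx // subDsgn_unit //; apply/Dsgn_neq1P; exists i0; rewrite xh_i0.
Qed.

Variable x0 : 'cV[R]_n.
Hypothesis Dx0 : Dsgn x0 != 1%:M.

Lemma newton_succ k : newton A b x0 k.+1 = invmx (A - Dsgn (newton A b x0 k)) *m b.
Proof. by []. Qed.

Lemma newton_Dsgn_neq1 k : Dsgn (newton A b x0 k) != 1%:M.
Proof.
elim: k => // k IH; apply/Dsgn_neq1P; exists i0.
by rewrite -xh_i0 (newton_step_le IH) // newton_succ mulKVmx // subDsgn_unit.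
Qed.

Lemma newton_stepE k : (A - Dsgn (newton A b x0 k)) *m newton A b x0 k.+1 = b.
Proof. by rewrite newton_succ mulKVmx // subDsgn_unit // newton_Dsgn_neq1. Qed.

Definition nonpos_set x : {set 'I_n} := [set i | x i 0 <= 0].

(* From the second iterate on, the set of nonpositive components shrinks
   strictly at every step until the iteration reaches xh. *)
Lemma newton_descent m :
  newton A b x0 m.+1 = xh \/ (#|nonpos_set (newton A b x0 m.+1)| + m <= n)%N.
Proof.
elim: m => [|m IH]; first by right; rewrite addn0 -[leqRHS](card_ord n) max_card.
have [|ne] := eqVneq (newton A b x0 m.+2) xh; [by left | right].
case: IH => [e|IH]; first by move: ne; rewrite newton_succ e newton_fixed_point eqxx.
have sub : nonpos_set (newton A b x0 m.+2) \subset nonpos_set (newton A b x0 m.+1).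
  apply/subsetP => i; rewrite !inE; apply: le_trans.
  exact: newton_step_mono (newton_Dsgn_neq1 _) (newton_stepE _) (newton_stepE _) i.
have nsub : ~~ (nonpos_set (newton A b x0 m.+1) \subset nonpos_set (newton A b x0 m.+2)).
  apply/negP => /subsetP nonpos_sub; move/eqP: ne; apply.
  apply: newton_step_eq (newton_stepE _) _ _.
  - by rewrite -xh_i0 (newton_step_le (newton_Dsgn_neq1 m) (newton_stepE m)).
  - exact: newton_step_le (newton_Dsgn_neq1 _) (newton_stepE _).
  - by move=> i x_i; have := nonpos_sub i; rewrite !inE; apply.
have : (#|nonpos_set (newton A b x0 m.+2)| < #|nonpos_set (newton A b x0 m.+1)|)%N.
  by rewrite (ltn_leqif (subset_leqif_card sub)).
lia.
Qed.

Lemma newton_eq_boundary k : (n.+1 <= k)%N -> newton A b x0 k = xh.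
Proof.
have xh_n1 : newton A b x0 n.+1 = xh.
  case: (newton_descent n) => // card_le; exfalso.
  have card0 : #|nonpos_set (newton A b x0 n.+1)| = 0%N by lia.
  have : i0 \in nonpos_set (newton A b x0 n.+1).
    by rewrite inE -xh_i0 (newton_step_le (newton_Dsgn_neq1 n) (newton_stepE n)).
  by rewrite (card0_eq card0).
elim: k => // k IH; rewrite ltnS leq_eqVlt => /predU1P [<- //|lt_nk].
by rewrite newton_succ IH // newton_fixed_point.
Qed.

End NewtonIteration.

End AbsoluteValueEquation.

Theorem theorem4p4 (R : rcfType) (n : nat) (A : 'M[R]_n) (v b : 'cV[R]_n) :
  (0 < n)%N ->
  singular_M_matrix (A - 1%:M) -> irreducible (A - 1%:M) ->
  (forall i, 0 < v i 0) -> (A^T - 1%:M) *m v = 0 ->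
  v^T *m b = 0 ->
  (forall x : 'cV[R]_n, A *m x - absv x = b -> forall i, 0 <= x i 0) /\
  exists xhat : 'cV[R]_n,
    (A *m xhat - absv xhat = b /\ exists i, xhat i 0 = 0) /\
    (forall y : 'cV[R]_n, A *m y - absv y = b -> (exists i, y i 0 = 0) -> y = xhat) /\
    (forall x0 : 'cV[R]_n, Dsgn x0 != 1%:M ->
       (forall k, A - Dsgn (newton A b x0 k) \in unitmx) /\
       (forall k, (n.+1 <= k)%N -> newton A b x0 k = xhat)).
Proof.
move=> n_gt0 [ZM _] irrM v_gt0 ATv vb.
have vM : v^T *m (A - 1%:M) = 0.
  by apply: trmx_inj; rewrite trmx_mul trmxK linearB /= trmx1 ATv trmx0.
have [xh [Mxh xh_ge0 [i0 xh_i0]]] := exists_boundary_solution ZM irrM v_gt0 vM vb n_gt0.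
have sol_ge0 := solution_ge0 v_gt0 vM vb.
split=> //; exists xh; split; first by rewrite solution_ge0E //; split; last exists i0.
split=> [y sol_y [j y_j]|x0 Dx0].
  apply: (boundary_solution_unique ZM irrM v_gt0 vM Mxh _ xh_ge0 (sol_ge0 _ sol_y) xh_i0 y_j).
  by rewrite -solution_ge0E //; apply: sol_ge0.
have Dx_neq1 := newton_Dsgn_neq1 ZM irrM v_gt0 vM Mxh xh_ge0 xh_i0 Dx0.
split=> k; first exact: subDsgn_unit ZM irrM v_gt0 vM _ (Dx_neq1 k).
exact: (newton_eq_boundary ZM irrM v_gt0 vM vb Mxh xh_ge0 xh_i0 Dx0 (k := k)).
Qed.
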